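(* Consider the following hybrid sealed-bid auction for a single item. There are $n_A$ ''integrated'' bidders, each with a private value drawn independently from the uniform distribution on $[0,1]$, and a single ''non-integrated'' bidder with private value $v \in [0,1]$, independent of the others. All bidders simultaneously submit bids and the highest bidder wins. If the winner is integrated, it pays the second-highest bid; if the winner is the non-integrated bidder, it pays its own bid. Suppose every integrated bidder bids its true value. Then in equilibrium the non-integrated bidder with value $v$ bids $\frac{n_A}{n_A+1} v$, and its equilibrium interim expected surplus is $$S(v) = \left(\frac{n_A}{n_A+1}\right)^{n_A} \frac{v^{n_A+1}}{n_A+1},$$ whereas if this bidder were also integrated (i.e. paid the second-highest bid upon winning and bid truthfully) its interim expected surplus would be $$S(v) = \frac{v^{n_A+1}}{n_A+1}.$$ In particular, being the sole non-integrated bidder costs it a fraction $\left(\frac{n_A}{n_A+1}\right)^{n_A}$ of its surplus relative to being integrated.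
   Context: Bidders are risk neutral with quasilinear utility (value minus payment if winning, zero otherwise). Interim expected surplus means the expected utility of the bidder conditional on its own value $v$. *)

From HB Require Import structures.
From mathcomp Require Import all_boot all_order all_algebra.
From mathcomp Require Import all_classical all_reals all_analysis.
Set Implicit Arguments.
Unset Strict Implicit.
Unset Printing Implicit Defensive.
Import Order.TTheory GRing.Theory Num.Theory.
Import numFieldNormedType.Exports.
Local Open Scope classical_set_scope.
Local Open Scope ring_scope.

Section Auction.
Variable R : realType.

(* Expectation of f(X_1,...,X_n) where X_1,...,X_n are i.i.d. uniform on
   [0,1], written as the iterated Lebesgue integral over [0,1]^n. *)
Fixpoint unifE (n : nat) (f : seq R -> R) : R :=
  match n with
  | 0 => f [::]
  | n'.+1 => Rintegral lebesgue_measure `[0%R, 1%R]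
               (fun x => unifE n' (fun s => f (x :: s)))
  end.

Definition maxbid (s : seq R) : R := \big[Num.max/0]_(x <- s) x.

(* Realized utility of the non-integrated bidder with value v bidding b,
   given the integrated bidders' (truthful) bids s: wins iff it is the
   highest bidder (ties, a null event, resolved in its favor), then pays
   its own bid. *)
Definition nonint_utility (v b : R) (s : seq R) : R :=
  if maxbid s <= b then v - b else 0.

(* Realized utility of the same bidder if it were integrated: bids its
   value v truthfully and, when winning, pays the second-highest bid,
   i.e. the highest competing bid. *)
Definition int_utility (v : R) (s : seq R) : R :=
  if maxbid s <= v then v - maxbid s else 0.

Definition U_nonint (nA : nat) (v b : R) : R := unifE nA (nonint_utility v b).
Definition S_int (nA : nat) (v : R) : R := unifE nA (int_utility v).

End Auction.

From HB Require Import structures.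
From mathcomp Require Import all_boot all_order all_algebra.
From mathcomp Require Import all_classical all_reals all_analysis.
From mathcomp Require Import ring lra.
Import Order.TTheory GRing.Theory Num.Theory.
Import numFieldNormedType.Exports.
Local Open Scope classical_set_scope.
Local Open Scope ring_scope.

(* Since the integrated bidders bid truthfully, the highest competing bid M is
   the maximum of nA independent uniforms, so P(M <= b) = b^nA and the bid b
   earns (v - b) b^nA; AM-GM applied to nA copies of b and one copy of
   nA (v - b) shows that this is maximal at b = nA v / (nA + 1).
   An integrated bidder earns E[(v - M)^+]; integrating out one competitor at
   a time while remembering the running maximum a, the expected surplus
   against a and k further competitors is (v^(k+1) - a^(k+1)) / (k + 1) when
   a <= v, and 0 otherwise. *)

Lemma bid_surplus_le (R : realFieldType) (n : nat) (v b : R) : 0 <= b <= v ->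
  (v - b) * b ^+ n <= (v - n%:R / n.+1%:R * v) * (n%:R / n.+1%:R * v) ^+ n.
Proof.
case/andP=> b0 bv; case: n => [|n]; first by rewrite !expr0 !mulr1; lra.
set c := n.+1%:R / n.+2%:R * v.
pose E (i : 'I_n.+2) := if i == ord_max then n.+1%:R * (v - b) else b.
have E_ge0 : {in predT, forall i, 0 <= E i}.
  by move=> i _; rewrite /E; case: eqP => // _; rewrite mulr_ge0 ?subr_ge0.
have E_widen i : E (widen_ord (leqnSn n.+1) i) = b.
  by rewrite /E ifN // -val_eqE /= neq_ltn ltn_ord.
have := (leif_AGM E_ge0).1; rewrite card_ord.
rewrite big_mkcond big_ord_recr /= (eq_bigr _ (fun i _ => E_widen i)).
rewrite prodr_const card_ord.
rewrite big_mkcond big_ord_recr /= (eq_bigr _ (fun i _ => E_widen i)).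
rewrite sumr_const card_ord.
rewrite /E eqxx -[b *+ _]mulr_natl -mulrDr subrKC mulrAC -/c.
have -> : c ^+ n.+2 = n.+1%:R * ((v - c) * c ^+ n.+1).
  by rewrite exprSr /c; field; rewrite -natrD pnatr_eq0.
by rewrite mulrCA ler_pM2l ?ltr0Sn // mulrC.
Qed.

Lemma optimal_bid_itv (R : realFieldType) (n : nat) (v : R) : 0 <= v ->
  0 <= n%:R / n.+1%:R * v <= v.
Proof.
move=> v0; rewrite mulr_ge0 ?divr_ge0 //= -[leRHS]mul1r ler_wpM2r //.
by rewrite ler_pdivrMr // mul1r ler_nat.
Qed.

Section UniformBidders.
Variable R : realType.
Local Notation mu := (@lebesgue_measure R).

Lemma Rintegral_cst_itv (lo hi c : R) : lo <= hi ->
  \int[mu]_(x in `[lo, hi]) c = c * (hi - lo).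
Proof.
move=> lohi; rewrite Rintegral_cst //= lebesgue_measure_itv /= lte_fin.
case: ltP => [//|hilo] /=.
have -> : hi = lo by apply/eqP; rewrite eq_le hilo lohi.
by rewrite subrr mulr0.
Qed.

Lemma Rintegral_itv_vanish (lo w hi : R) (f : R -> R) : w <= hi ->
  {in `]w, hi], forall x, f x = 0} ->
  \int[mu]_(x in `[lo, hi]) f x = \int[mu]_(x in `[lo, w]) f x.
Proof.
move=> whi f0; rewrite [LHS]Rintegral_mkcond [RHS]Rintegral_mkcond.
congr Rintegral; apply: funext => x; rewrite /patch /= !mem_setE /= !in_itv /=.
have [xw|wx] := leP x w; first by rewrite (le_trans xw whi).
rewrite andbF; case: ifP => // /andP[_ xhi].
by rewrite f0 // in_itv /= wx.
Qed.

Lemma Rintegral_itv_max (f : R -> R) (lo a w : R) : continuous f -> lo <= a <= w ->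
  \int[mu]_(x in `[lo, w]) f (Num.max a x)
  = f a * (a - lo) + \int[mu]_(x in `[a, w]) f x.
Proof.
move=> fC /andP[loa aw].
have int_itv (l h : R) g : continuous g -> mu.-integrable `[l, h] (EFin \o g).
  move=> gC; apply: continuous_compact_integrable; first exact: segment_compact.
  exact: continuous_subspaceT.
have maxC : continuous (fun x => f (Num.max a x)).
  move=> x; apply: continuous_comp; last exact: fC.
  apply: (@max_fun_continuous _ _ _ (cst a) id); first exact: cst_continuous.
  by move=> ?; exact: cvg_id.
have := Rintegral_itvB (int_itv lo w _ maxC) (x := a).
rewrite !bnd_simp => /(_ loa aw) /eqP; rewrite subr_eq => /eqP ->.
have -> : \int[mu]_(x in `[lo, a]) f (Num.max a x) = f a * (a - lo).
  transitivity (\int[mu]_(x in `[lo, a]) f a); last exact: Rintegral_cst_itv.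
  by apply: eq_Rintegral => x; rewrite inE /= in_itv /= => /andP[_ xa]; rewrite max_l.
rewrite addrC; congr (_ + _).
transitivity (\int[mu]_(x in `]a, w]) f x).
  by apply: eq_Rintegral => x; rewrite inE /= in_itv /= => /andP[ax _]; rewrite max_r // ltW.
rewrite Rintegral_itv_obnd_cbnd //; apply: integrableS (int_itv a w _ fC) => //.
exact: subset_itv_oc_cc.
Qed.

Lemma Rintegral_deriv_poly (p : {poly R}) (lo hi : R) : lo <= hi ->
  \int[mu]_(x in `[lo, hi]) (p^`()).[x] = p.[hi] - p.[lo].
Proof.
rewrite le_eqVlt => /predU1P[<-|lohi].
  by rewrite set_itv1 Rintegral_set1 subrr.
rewrite /Rintegral (@continuous_FTC2 _ _ (horner p)) //=.
- exact/continuous_subspaceT/continuous_horner.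
- split; first by move=> x _; exact: derivable_horner.
  + exact/cvg_at_right_filter/continuous_horner.
  + exact/cvg_at_left_filter/continuous_horner.
- by move=> x _; rewrite -derivE.
Qed.

Lemma Rintegral_indicator_le (b c : R) :
  \int[mu]_(x in `[0, 1]) (if x <= b then c else 0)
  = if 0 <= b then c * Num.min b 1 else 0.
Proof.
have [b0|b0] := ltP b 0.
  rewrite (@eq_Rintegral _ _ _ _ _ (fun _ => 0)) ?Rintegral_cst_itv ?mul0r //.
  move=> x; rewrite inE /= in_itv /= => /andP[x0 _].
  by rewrite leNgt (lt_le_trans b0 x0).
have [b1|b1] := leP 1 b.
  rewrite (@eq_Rintegral _ _ _ _ _ (fun _ => c)) ?Rintegral_cst_itv ?subr0 //.
  by move=> x; rewrite inE /= in_itv /= => /andP[_ x1]; rewrite (le_trans x1 b1).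
rewrite (@Rintegral_itv_vanish 0 b 1 _ (ltW b1)); last first.
  by move=> x; rewrite in_itv /= => /andP[bx _]; rewrite leNgt bx.
rewrite (@eq_Rintegral _ _ _ _ _ (fun _ => c)) ?Rintegral_cst_itv ?subr0 //.
by move=> x; rewrite inE /= in_itv /= => /andP[_ ->].
Qed.

Lemma eq_unifE n (f g : seq R -> R) : f =1 g -> unifE n f = unifE n g.
Proof. by move=> /funext ->. Qed.

Lemma unifE_cst n (c : R) : unifE n (fun=> c) = c.
Proof. by elim: n => [//|n IH] /=; rewrite IH Rintegral_cst_itv // subr0 mulr1. Qed.

Lemma maxbid_cons (x : R) s : maxbid (x :: s) = Num.max x (maxbid s).
Proof. by rewrite /maxbid big_cons. Qed.

Lemma maxbid_ge0 (s : seq R) : 0 <= maxbid s.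
Proof.
elim: s => [|x s IH]; first by rewrite /maxbid big_nil.
by rewrite maxbid_cons le_max IH orbT.
Qed.

Lemma unifE_maxbid_le n (b c : R) :
  unifE n (fun s => if maxbid s <= b then c else 0)
  = if 0 <= b then c * Num.min b 1 ^+ n else 0.
Proof.
elim: n => [|n IH] /=; first by rewrite /maxbid big_nil mulr1.
transitivity (\int[mu]_(x in `[0, 1])
    (if x <= b then if 0 <= b then c * Num.min b 1 ^+ n else 0 else 0)).
  apply: eq_Rintegral => x _.
  rewrite (@eq_unifE _ _ (fun s => if x <= b then if maxbid s <= b then c else 0 else 0)).
    by case: (x <= b); rewrite ?IH ?unifE_cst.
  by move=> s; rewrite maxbid_cons ge_max; case: (x <= b).
by rewrite Rintegral_indicator_le; case: ifP => // ->; rewrite exprSr mulrA.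
Qed.

Lemma U_nonintE n (v b : R) :
  U_nonint n v b = if 0 <= b then (v - b) * Num.min b 1 ^+ n else 0.
Proof. exact: unifE_maxbid_le. Qed.

Lemma U_nonint_le_optimal n (v b : R) : 0 <= v <= 1 ->
  U_nonint n v b <= U_nonint n v (n%:R / n.+1%:R * v).
Proof.
case/andP=> v0 v1; set c := n%:R / n.+1%:R * v.
have /andP[c0 cv] : 0 <= c <= v by exact: optimal_bid_itv.
have Uc_ge0 : 0 <= (v - c) * c ^+ n by rewrite mulr_ge0 ?subr_ge0 ?exprn_ge0.
rewrite !U_nonintE c0 [Num.min c 1]min_l ?(le_trans cv v1) //.
case: ifP => // b0; have [b1|b1] := leP 1 b.
  by rewrite expr1n mulr1 (le_trans _ Uc_ge0) // subr_le0 (le_trans v1).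
have [vb|bv] := leP v b.
  by rewrite (le_trans _ Uc_ge0) // mulr_le0_ge0 ?subr_le0 ?exprn_ge0.
by apply: bid_surplus_le; rewrite b0 ltW.
Qed.

Lemma U_nonint_optimalE n (v : R) : 0 <= v <= 1 ->
  U_nonint n v (n%:R / n.+1%:R * v) = (n%:R / n.+1%:R) ^+ n * (v ^+ n.+1 / n.+1%:R).
Proof.
case/andP=> v0 v1; have /andP[c0 cv] := @optimal_bid_itv _ n _ v0.
rewrite U_nonintE c0 min_l ?(le_trans cv v1) // exprMn exprS.
by field; rewrite addrC natr1 pnatr_eq0.
Qed.

Definition int_surplus n (v t : R) : R :=
  if t <= v then (v ^+ n.+1 - t ^+ n.+1) / n.+1%:R else 0.

Definition int_surplus_primitive n (v : R) : {poly R} :=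
  (v ^+ n.+1 / n.+1%:R) *: 'X - (n.+1%:R * n.+2%:R)^-1 *: 'X^(n.+2).

Lemma int_surplus_primitiveE n (v t : R) :
  (int_surplus_primitive n v).[t] = (v ^+ n.+1 * t - t ^+ n.+2 / n.+2%:R) / n.+1%:R.
Proof.
rewrite !(hornerD, hornerN, hornerZ, hornerX, hornerXn).
by field; rewrite [1 + _]addrC natr1 -natrD !pnatr_eq0.
Qed.

Lemma deriv_int_surplus_primitive n (v t : R) :
  ((int_surplus_primitive n v)^`()).[t] = (v ^+ n.+1 - t ^+ n.+1) / n.+1%:R.
Proof.
rewrite derivB !derivZ derivX derivXn hornerD hornerN !hornerZ hornerMn.
rewrite hornerXn hornerC -[t ^+ _ *+ _]mulr_natr.
by field; rewrite [1 + _]addrC natr1 -natrD !pnatr_eq0.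
Qed.

Lemma Rintegral_int_surplus_max n (v a : R) : 0 <= v <= 1 -> 0 <= a <= 1 ->
  \int[mu]_(x in `[0, 1]) int_surplus n v (Num.max a x) = int_surplus n.+1 v a.
Proof.
move=> /andP[v0 v1] /andP[a0 a1]; rewrite /int_surplus.
have [va|av] := ltP v a.
  rewrite (@eq_Rintegral _ _ _ _ _ (fun _ => 0)) ?Rintegral_cst_itv ?mul0r //.
  by move=> x _; rewrite ge_max leNgt va.
pose Q := int_surplus_primitive n v.
rewrite (@Rintegral_itv_vanish 0 v 1 _ v1); last first.
  by move=> x; rewrite in_itv /= => /andP[vx _]; rewrite ge_max [x <= v]leNgt vx andbF.
transitivity (\int[mu]_(x in `[0, v]) (Q^`()).[Num.max a x]).
  apply: eq_Rintegral => x; rewrite inE /= in_itv /= => /andP[_ xv].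
  by rewrite ge_max av xv deriv_int_surplus_primitive.
rewrite Rintegral_itv_max ?a0 ?av //; last exact: continuous_horner.
rewrite Rintegral_deriv_poly // !int_surplus_primitiveE deriv_int_surplus_primitive.
by rewrite subr0 !exprS; field; rewrite [1 + _]addrC natr1 -natrD !pnatr_eq0.
Qed.

Lemma unifE_int_utility_cons n (v a : R) : 0 <= v <= 1 -> 0 <= a <= 1 ->
  unifE n (fun s => int_utility v (a :: s)) = int_surplus n v a.
Proof.
move=> v01; elim: n a => [|n IH] a /andP[a0 a1] /=.
  by rewrite /int_utility /int_surplus maxbid_cons /maxbid big_nil max_l // !expr1 divr1.
rewrite -Rintegral_int_surplus_max ?a0 //.
apply: eq_Rintegral => x; rewrite inE /= in_itv /= => /andP[x0 x1].
rewrite -IH ?le_max ?ge_max ?a0 ?a1 //.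
by apply: eq_unifE => s; rewrite /int_utility !maxbid_cons maxA.
Qed.

Lemma S_intE n (v : R) : 0 <= v <= 1 -> S_int n v = v ^+ n.+1 / n.+1%:R.
Proof.
move=> v01; rewrite /S_int.
rewrite (@eq_unifE _ _ (fun s => int_utility v (0 :: s))); last first.
  by move=> s; rewrite /int_utility maxbid_cons max_r // maxbid_ge0.
rewrite unifE_int_utility_cons ?lexx ?ler01 // /int_surplus.
by case/andP: v01 => -> _; rewrite expr0n subr0.
Qed.

End UniformBidders.

Theorem mainTheorem2 (R : realType) (nA : nat) (v : R) :
  0 <= v <= 1 ->
  let bstar := nA%:R / nA.+1%:R * v in
  [/\ (* bstar is an optimal bid (best response to truthful integrated bidders) *)
      (forall b : R, U_nonint nA v b <= U_nonint nA v bstar),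
      (* equilibrium interim surplus of the non-integrated bidder *)
      U_nonint nA v bstar = (nA%:R / nA.+1%:R) ^+ nA * (v ^+ nA.+1 / nA.+1%:R),
      (* interim surplus if it were integrated *)
      S_int nA v = v ^+ nA.+1 / nA.+1%:R &
      (* ratio *)
      U_nonint nA v bstar = (nA%:R / nA.+1%:R) ^+ nA * S_int nA v].
Proof.
move=> v01 bstar; have Ubstar := @U_nonint_optimalE R nA v v01.
split; [by move=> b; apply: U_nonint_le_optimal | exact: Ubstar | exact: S_intE |].
by rewrite Ubstar S_intE.
Qed.
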